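(* Let $K_1,\dots,K_M$ be matrices with $K_i\in\mathbb{R}^{p\times d_i}$ having orthonormal columns, and suppose $\mathrm{span}[K_1\,K_2\,\cdots\,K_M]=\mathbb{R}^p$. Let $A_i=\{\mathbf a\in\mathbb{R}^p:\ \exists\,\alpha^i\in\mathbb{R}^{d_i},\ \mathbf a=K_i\alpha^i,\ \|\mathbf a\|=\|\alpha^i\|=1\}$ and $\mathcal A=\bigcup_{i=1}^M A_i$. Then for every $\mathbf x\in\mathbb{R}^p$ the atomic norm satisfies \[\|\mathbf x\|_{\mathcal A}=\min_{\mathbf x=\sum_i K_i\alpha^i}\ \sum_{i=1}^M\|\alpha^i\|,\] where the minimum is over all families $\alpha^i\in\mathbb{R}^{d_i}$, $i=1,\dots,M$, with $\mathbf x=\sum_i K_i\alpha^i$.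
   Context: For a set of atoms $\mathcal A\subset\mathbb{R}^p$, the atomic norm of $\mathbf x\in\mathbb{R}^p$ is $\|\mathbf x\|_{\mathcal A}=\inf\{\sum_{\mathbf a\in\mathcal A}c_{\mathbf a}:\ \mathbf x=\sum_{\mathbf a\in\mathcal A}c_{\mathbf a}\mathbf a,\ c_{\mathbf a}\ge 0\}$ (only countably many, in fact finitely many, $c_{\mathbf a}$ nonzero). All norms without subscript are Euclidean norms. *)

From HB Require Import structures.
From mathcomp Require Import all_boot all_order all_algebra.
From mathcomp Require Import classical_sets reals.
Set Implicit Arguments. Unset Strict Implicit. Unset Printing Implicit Defensive.
Import Order.TTheory GRing.Theory Num.Theory.
Local Open Scope ring_scope.
Local Open Scope classical_set_scope.

Definition enorm (R : realType) (n : nat) (v : 'cV[R]_n) : R :=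
  Num.sqrt (\sum_(j < n) v j 0 ^+ 2).

Definition atoms (R : realType) (p M : nat) (d : 'I_M -> nat)
  (K : forall i : 'I_M, 'M[R]_(p, d i)) : set 'cV[R]_p :=
  [set a | exists i : 'I_M, exists alpha : 'cV[R]_(d i),
      a = K i *m alpha /\ enorm a = 1 /\ enorm alpha = 1].

Definition atomic_norm (R : realType) (p : nat) (A : set 'cV[R]_p)
  (x : 'cV[R]_p) : R :=
  inf [set t : R | exists s : seq (R * 'cV[R]_p),
        (forall ca, ca \in s -> 0 <= ca.1 /\ A ca.2) /\
        x = \sum_(ca <- s) ca.1 *: ca.2 /\
        t = \sum_(ca <- s) ca.1].

(* An atom of A_i is a = K_i u with |u| = 1, and then u = K_i^T a.  Grouping
   the atoms of a nonnegative atomic decomposition x = sum_a c_a a by block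
   therefore gives a block decomposition x = sum_i K_i alpha_i with
   sum_i |alpha_i| <= sum_a c_a, by the triangle inequality.  Conversely a block
   decomposition alpha is the atomic decomposition with atoms
   K_i (alpha_i / |alpha_i|) and weights |alpha_i|.  So the atomic norm is the
   infimum of sum_i |alpha_i| over block decompositions, and this infimum is a
   minimum: the decompositions costing at most that of a given one form a
   closed subset of a box. *)
From HB Require Import structures.
From mathcomp Require Import all_boot all_order all_algebra.
From mathcomp Require Import boolp classical_sets functions reals topology.
From mathcomp Require Import normedtype derive realfun function_spaces.
From mathcomp Require Import ring lra.
Set Implicit Arguments. Unset Strict Implicit. Unset Printing Implicit Defensive.
Import Order.TTheory GRing.Theory Num.Theory.
Import numFieldNormedType.Exports ArrowAsProduct.
Local Open Scope ring_scope.
Local Open Scope classical_set_scope.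

Section EuclideanNorm.
Variable R : realType.

Lemma cauchy_schwarz_sum n (f g : 'I_n -> R) :
  (\sum_i f i * g i) ^+ 2 <= (\sum_i f i ^+ 2) * (\sum_i g i ^+ 2).
Proof.
(* Lagrange's identity: the gap is half of sum_(i,j) (f i g j - f j g i)^2. *)
set F := \sum_i f i ^+ 2; set G := \sum_i g i ^+ 2; set C := \sum_i f i * g i.
have FG : F * G = \sum_i \sum_j f i ^+ 2 * g j ^+ 2.
  by rewrite big_distrl; apply: eq_bigr => i _; rewrite big_distrr.
have GF : F * G = \sum_i \sum_j f j ^+ 2 * g i ^+ 2.
  rewrite mulrC big_distrl; apply: eq_bigr => i _; rewrite big_distrr.
  by apply: eq_bigr => j _; rewrite mulrC.
have CC : C ^+ 2 = \sum_i \sum_j (f i * g i) * (f j * g j).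
  by rewrite expr2 big_distrl; apply: eq_bigr => i _; rewrite big_distrr.
have lagrange : \sum_i \sum_j (f i * g j - f j * g i) ^+ 2 =
    F * G + F * G - 2 * C ^+ 2.
  rewrite {1}FG GF CC mulr_sumr -big_split -sumrB; apply: eq_bigr => i _ /=.
  by rewrite mulr_sumr -big_split -sumrB; apply: eq_bigr => j _ /=; ring.
have : 0 <= \sum_i \sum_j (f i * g j - f j * g i) ^+ 2.
  by apply: sumr_ge0 => i _; apply: sumr_ge0 => j _; apply: sqr_ge0.
rewrite lagrange; lra.
Qed.

Lemma enorm_ge0 n (v : 'cV[R]_n) : 0 <= enorm v.
Proof. exact: sqrtr_ge0. Qed.

Lemma sqr_enorm n (v : 'cV[R]_n) : enorm v ^+ 2 = \sum_j v j 0 ^+ 2.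
Proof. by rewrite sqr_sqrtr // sumr_ge0 // => j _; apply: sqr_ge0. Qed.

Lemma enorm0 n : enorm (0 : 'cV[R]_n) = 0.
Proof. by rewrite /enorm big1 ?sqrtr0 // => j _; rewrite mxE expr0n. Qed.

Lemma enormZ n (a : R) (v : 'cV[R]_n) : enorm (a *: v) = `|a| * enorm v.
Proof.
rewrite /enorm -sqrtr_sqr -sqrtrM ?sqr_ge0 // mulr_sumr.
by congr Num.sqrt; apply: eq_bigr => j _; rewrite mxE exprMn.
Qed.

Lemma dot_le_enorm n (u v : 'cV[R]_n) :
  \sum_j u j 0 * v j 0 <= enorm u * enorm v.
Proof.
have := cauchy_schwarz_sum (fun j => u j 0) (fun j => v j 0).
rewrite -!sqr_enorm -exprMn; have := mulr_ge0 (enorm_ge0 u) (enorm_ge0 v).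
by move: (\sum_j _) (_ * _) => c N; nra.
Qed.

Lemma ler_enormD n (u v : 'cV[R]_n) : enorm (u + v) <= enorm u + enorm v.
Proof.
have uv_ge0 := addr_ge0 (enorm_ge0 u) (enorm_ge0 v).
rewrite -ler_sqr ?nnegrE ?enorm_ge0 // !sqr_enorm.
have -> : \sum_j (u + v) j 0 ^+ 2 =
    \sum_j u j 0 ^+ 2 + \sum_j v j 0 ^+ 2 + 2 * \sum_j u j 0 * v j 0.
  by rewrite mulr_sumr -!big_split; apply: eq_bigr => j _ /=; rewrite mxE; ring.
by rewrite -!sqr_enorm; have := dot_le_enorm u v; nra.
Qed.

Lemma ler_coord_enorm n (v : 'cV[R]_n) j : `|v j 0| <= enorm v.
Proof.
rewrite -ler_sqr ?nnegrE ?enorm_ge0 // sqr_enorm real_normK ?num_real //.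
by rewrite (bigD1 j) //= lerDl sumr_ge0 // => k _; apply: sqr_ge0.
Qed.

Lemma enorm_eq0 n (v : 'cV[R]_n) : enorm v = 0 -> v = 0.
Proof.
move=> v0; apply/matrixP => j k; rewrite (ord1 k) mxE.
by apply/eqP; rewrite -normr_le0 -v0 ler_coord_enorm.
Qed.

Lemma enorm_orthomx m n (K : 'M[R]_(m, n)) (v : 'cV[R]_n) :
  K^T *m K = 1%:M -> enorm (K *m v) = enorm v.
Proof.
have dotE k (w : 'cV[R]_k) : enorm w = Num.sqrt ((w^T *m w) 0 0).
  by rewrite mxE; congr Num.sqrt; apply: eq_bigr => j _; rewrite mxE expr2.
by move=> KK; rewrite !dotE trmx_mul -mulmxA (mulmxA K^T) KK mul1mx.
Qed.
End EuclideanNorm.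

Section Compactness.
Variable R : realType.

Lemma continuous_sum (T : topologicalType) (I : Type) (s : seq I) (P : pred I)
    (F : I -> T -> R) :
  (forall i, continuous (F i)) ->
  continuous (fun t => \sum_(i <- s | P i) F i t).
Proof.
move=> Fcont; rewrite -fct_sumE.
apply: (big_ind (fun f => continuous f)) => //; first exact: cst_continuous.
by move=> f g fc gc t; exact: continuousD (fc t) (gc t).
Qed.

Lemma continuous_mx (T : topologicalType) m n (f : T -> 'M[R]_(m, n)) :
  (forall i j, continuous (fun t => f t i j)) -> continuous f.
Proof.
move=> fcont t A [P /= Pnbhs PA].
have : \forall s \near t, forall ij : 'I_m * 'I_n, P ij.1 ij.2 (f s ij.1 ij.2).
  by apply: filter_forall => -[i j]; exact: fcont i j t _ (Pnbhs i j).
by apply: filterS => s Ps; apply: PA => i j; exact: Ps (i, j).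
Qed.

Lemma compact_cV_box n (c : R) :
  compact [set v : 'cV[R]_n | forall j, `|v j 0| <= c].
Proof.
pose B := [set w : 'rV[R]_n | forall j, `[-c, c]%classic (w 0 j)].
have Bcompact : compact B.
  apply: (@rV_compact _ _ (fun=> `[-c, c]%classic)) => _.
  exact: segment_compact.
have -> : [set v : 'cV[R]_n | forall j, `|v j 0| <= c] = trmx @` B.
  apply/seteqP; split => [v vc | _ [w wB <-] j].
    by exists v^T; [move=> j; rewrite /= in_itv /= mxE -ler_norml | rewrite trmxK].
  by have := wB j; rewrite /= in_itv /= mxE ler_norml.
apply: continuous_compact => //; apply/continuous_subspaceT/continuous_mx.
by move=> i j; under [fun t => _]funext => t do rewrite mxE; exact: coord_continuous.
Qed.

Lemma continuous_block_coord (M : nat) (d : 'I_M -> nat) i l k :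
  continuous (fun b : forall i : 'I_M, 'cV[R]_(d i) => b i l k).
Proof.
move=> b; apply: (continuous_comp (f := fun b : forall i, 'cV[R]_(d i) => b i)
  (g := fun v : 'cV[R]_(d i) => v l k)).
  exact: proj_continuous.
exact: coord_continuous.
Qed.

Lemma continuous_sum_enorm (M : nat) (d : 'I_M -> nat) :
  continuous (fun b : forall i : 'I_M, 'cV[R]_(d i) => \sum_i enorm (b i)).
Proof.
apply: continuous_sum => i b.
apply: (continuous_comp
  (f := fun b : forall i, 'cV[R]_(d i) => \sum_j b i j 0 ^+ 2));
  last exact: sqrt_continuous.
move: b; apply: continuous_sum => j b.
by apply: continuousM; apply: continuous_block_coord.
Qed.

Lemma closed_block_decompositions (p M : nat) (d : 'I_M -> nat)
    (K : forall i, 'M[R]_(p, d i)) (x : 'cV[R]_p) :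
  closed [set b : forall i : 'I_M, 'cV[R]_(d i) | x = \sum_i K i *m b i].
Proof.
have -> : [set b : forall i : 'I_M, 'cV[R]_(d i) | x = \sum_i K i *m b i] =
    \bigcap_(r in [set: 'I_p])
      ((fun b : forall i, 'cV[R]_(d i) => \sum_i \sum_l K i r l * b i l 0)
         @^-1` [set x r 0]).
  apply/seteqP; split => [b -> r _ | b xb] /=.
    by rewrite summxE; apply: eq_bigr => i _; rewrite mxE.
  apply/matrixP => r k; rewrite (ord1 k) -(xb r I) summxE.
  by apply: eq_bigr => i _; rewrite mxE.
apply: closed_bigI => r _; apply: preimage_closed; last exact: closed_eq.
move=> b _; move: b; apply: continuous_sum => i; apply: continuous_sum => l b.
by apply: continuousM; [exact: cst_continuous | exact: continuous_block_coord].
Qed.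
End Compactness.

Section BlockDecompositions.
Variables (R : realType) (p M : nat) (d : 'I_M -> nat).
Variable K : forall i : 'I_M, 'M[R]_(p, d i).

Lemma ler_coord_sum_enorm (b : forall i : 'I_M, 'cV[R]_(d i)) i j :
  `|b i j 0| <= \sum_i enorm (b i).
Proof.
apply: le_trans (ler_coord_enorm (b i) j) _.
by rewrite (bigD1 i) //= lerDl sumr_ge0 // => k _; apply: enorm_ge0.
Qed.

Lemma exists_min_block_decomposition (x : 'cV[R]_p)
    (b0 : forall i, 'cV[R]_(d i)) :
  x = \sum_i K i *m b0 i ->
  exists2 a : forall i, 'cV[R]_(d i), x = \sum_i K i *m a i &
    forall b : forall i, 'cV[R]_(d i), x = \sum_i K i *m b i ->
      \sum_i enorm (a i) <= \sum_i enorm (b i).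
Proof.
move=> xb0; set c := \sum_i enorm (b0 i).
(* Decompositions costing at most c lie in a box, which makes the search compact. *)
pose S := [set b : forall i : 'I_M, 'cV[R]_(d i) |
    forall i, [set v : 'cV[R]_(d i) | forall j, `|v j 0| <= c] (b i)]
  `&` [set b | x = \sum_i K i *m b i].
have Scompact : compact S.
  apply: compact_closedI; last exact: closed_block_decompositions.
  apply: (@tychonoff _ (fun i => 'cV[R]_(d i))
    (fun i => [set v | forall j, `|v j 0| <= c])) => i.
  exact: compact_cV_box.
have S0 : S !=set0 by exists b0; split => //= i j; apply: ler_coord_sum_enorm.
have [a aS amin] := compact_EVT_min S0 Scompact
  (continuous_subspaceT (@continuous_sum_enorm R M d)).
move: aS; rewrite inE => -[_ xa]; exists a => // b xb.
have [//|ba] := lerP (\sum_i enorm (a i)) (\sum_i enorm (b i)).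
have ac : \sum_i enorm (a i) <= c.
  by apply: amin; rewrite inE; split => //= i j; apply: ler_coord_sum_enorm.
have /amin : b \in S.
  rewrite inE; split => //= i j; apply: le_trans (ler_coord_sum_enorm b j) _.
  by apply: ltW; apply: lt_le_trans ac.
by rewrite leNgt ba.
Qed.

Hypothesis Korth : forall i, (K i)^T *m K i = 1%:M.

Lemma atomic_decomposition_blocks (s : seq (R * 'cV[R]_p)) :
  (forall ca, ca \in s -> 0 <= ca.1 /\ atoms K ca.2) ->
  exists beta : forall i, 'cV[R]_(d i),
    \sum_(ca <- s) ca.1 *: ca.2 = \sum_i K i *m beta i /\
    \sum_i enorm (beta i) <= \sum_(ca <- s) ca.1.
Proof.
elim: s => [|[c a] s IHs] sA.
  exists (fun=> 0); rewrite !big_nil big1 => [|i _]; last by rewrite mulmx0.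
  by split => //; rewrite big1 // => i _; rewrite enorm0.
have [|beta [sbeta beta_le]] := IHs.
  by move=> ca sca; apply: sA; rewrite inE sca orbT.
have [/= c_ge0 [i [u [au [_ u1]]]]] := sA (c, a) (mem_head _ _).
(* The new atom only changes block i, by c * u with u = K_i^T a. *)
pose delta k : 'cV[R]_(d k) := (k == i)%:R * c *: ((K k)^T *m a).
have deltaE : forall k, k != i -> delta k = 0.
  by move=> k /negbTE ki; rewrite /delta ki mul0r scale0r.
have delta_i : delta i = c *: u by rewrite /delta eqxx mul1r au mulmxA Korth mul1mx.
exists (fun k => beta k + delta k); rewrite !big_cons /=; split.
  rewrite sbeta (eq_bigr _ (fun k _ => mulmxDr _ _ _)) big_split /= addrC.
  congr (_ + _); rewrite (bigD1 i) //= big1 => [|k ki]; last first.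
    by rewrite deltaE ?mulmx0.
  by rewrite delta_i -scalemxAr -au addr0.
apply: le_trans (ler_sum _ (fun k _ => ler_enormD (beta k) (delta k))) _.
rewrite big_split /= addrC lerD // (bigD1 i) //= big1 => [|k ki].
  by rewrite delta_i enormZ u1 ger0_norm // mulr1 addr0.
by rewrite deltaE ?enorm0.
Qed.

Lemma blocks_atomic_decomposition (alpha : forall i, 'cV[R]_(d i)) :
  exists s : seq (R * 'cV[R]_p),
    [/\ forall ca, ca \in s -> 0 <= ca.1 /\ atoms K ca.2,
        \sum_i K i *m alpha i = \sum_(ca <- s) ca.1 *: ca.2 &
        \sum_i enorm (alpha i) = \sum_(ca <- s) ca.1].
Proof.
pose nz := [pred i | enorm (alpha i) != 0].
have sum_nz (V : zmodType) (F : 'I_M -> V) : (forall i, ~~ nz i -> F i = 0) ->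
    \sum_i F i = \sum_(i <- index_enum 'I_M | nz i) F i.
  by move=> F0; rewrite (bigID nz) /= [X in _ + X]big1 ?addr0.
exists [seq (enorm (alpha i), K i *m ((enorm (alpha i))^-1 *: alpha i))
       | i <- index_enum 'I_M & nz i]; split.
- move=> ca /mapP [i]; rewrite mem_filter => /andP [nz_i _] -> /=.
  split; first exact: enorm_ge0.
  have unit_norm : enorm ((enorm (alpha i))^-1 *: alpha i) = 1.
    by rewrite enormZ ger0_norm ?invr_ge0 ?enorm_ge0 // mulVf.
  by exists i, ((enorm (alpha i))^-1 *: alpha i); rewrite enorm_orthomx.
- rewrite big_map big_filter sum_nz => [|i /negPn /eqP /enorm_eq0 ->].
    apply: eq_bigr => i nz_i.
    by rewrite -scalemxAr scalerA mulfV // scale1r.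
  by rewrite mulmx0.
- by rewrite big_map big_filter sum_nz // => i /negPn /eqP.
Qed.
End BlockDecompositions.

Theorem lemma1 (R : realType) (p M : nat) (d : 'I_M -> nat)
  (K : forall i : 'I_M, 'M[R]_(p, d i))
  (Horth : forall i : 'I_M, (K i)^T *m K i = 1%:M)
  (Hspan : forall x : 'cV[R]_p, exists alpha : forall i : 'I_M, 'cV[R]_(d i),
      x = \sum_(i < M) K i *m alpha i) :
  forall x : 'cV[R]_p,
    exists alpha : forall i : 'I_M, 'cV[R]_(d i),
      x = \sum_(i < M) K i *m alpha i /\
      (forall beta : forall i : 'I_M, 'cV[R]_(d i),
          x = \sum_(i < M) K i *m beta i ->
          \sum_(i < M) enorm (alpha i) <= \sum_(i < M) enorm (beta i)) /\
      atomic_norm (atoms K) x = \sum_(i < M) enorm (alpha i).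
Proof.
move=> x; have [b0 xb0] := Hspan x.
have [a xa amin] := exists_min_block_decomposition xb0.
exists a; split=> //; split=> //.
rewrite /atomic_norm; set costs := [set t : R | _].
have costs_a : costs (\sum_i enorm (a i)).
  have [s [sA as_ cost_s]] := blocks_atomic_decomposition Horth a.
  by exists s; rewrite xa as_ cost_s.
have costs_ge : lbound costs (\sum_i enorm (a i)).
  move=> _ [s [sA [xs ->]]].
  have [beta [sbeta beta_le]] := atomic_decomposition_blocks Horth sA.
  by apply: le_trans beta_le; apply: amin; rewrite xs.
apply/eqP; rewrite eq_le; apply/andP; split.
  by apply: ge_inf => //; exists (\sum_i enorm (a i)).
by apply: lb_le_inf => //; exists (\sum_i enorm (a i)).
Qed.
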